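(* Let $\Omega_n=\dfrac{\pi^{n/2}}{\Gamma\left(\frac n2+1\right)}$ for $n\in\mathbb{N}_0$. Then \[ \left(1+\frac1n\right)^{\frac12-\frac1{4n}+\frac1{8n^2}}<\frac{\Omega_n^2}{\Omega_{n-1}\Omega_{n+1}} \] for every integer $n\ge5$, and \[ \frac{\Omega_n^2}{\Omega_{n-1}\Omega_{n+1}}<\left(1+\frac1n\right)^{\frac12-\frac1{4n}+\frac1{8n^2}+\frac1{48n^3}} \] for every integer $n\ge1$.
   Context: $\Omega_n$ is the volume of the unit ball in $\mathbb{R}^n$ ($\Omega_0=1$); $\Gamma$ is Euler's gamma function. *)

From Stdlib Require Import Reals.
From Coquelicot Require Import Coquelicot.
Open Scope R_scope.

Definition Gamma (x : R) : R :=
  RInt_gen (fun t => Rpower t (x - 1) * exp (- t))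
           (at_right 0) (Rbar_locally p_infty).

(* Volume of the unit ball in R^n: Omega n = pi^(n/2) / Gamma(n/2 + 1). *)
Definition Omega (n : nat) : R :=
  Rpower PI (INR n / 2) / Gamma (INR n / 2 + 1).

(* With A_n := Omega_n^2 / (Omega_(n-1) Omega_(n+1)), the functional equation of Gamma gives
   A_n A_(n+1) = (n+2)/(n+1), and log-convexity of Gamma gives A_n >= 1.  Put
   F_n := ln A_n - p(n) ln(1 + 1/n) for an exponent p.  The product formula eliminates A from
   F_n - F_(n+2), which becomes an explicit combination of logarithms; bounding these by the
   series of artanh, it is positive for the lower exponent (n >= 5) and negative for the upper
   one (n >= 1).  Since F_n = O(1/n), F_n itself then has that sign. *)

From Stdlib Require Import Reals.
From Coquelicot Require Import Coquelicot.
From Stdlib Require Import Lra Lia Psatz Classical List.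
Import ListNotations.
Open Scope R_scope.

Lemma ball_Rabs (x e y : R) : ball x e y <-> Rabs (y - x) < e.
Proof. reflexivity. Qed.

Section NonnegIntegrand.

Variable f : R -> R.
Hypothesis f_continuous : forall t, 0 < t -> continuous f t.
Hypothesis f_nonneg : forall t, 0 < t -> 0 <= f t.

Lemma ex_RInt_pos a b : 0 < a -> 0 < b -> ex_RInt f a b.
Proof.
  intros Ha Hb. apply (@ex_RInt_continuous R_CompleteNormedModule).
  intros t Ht. apply f_continuous.
  assert (0 < Rmin a b) by (apply Rmin_glb_lt; lra). lra.
Qed.

Lemma RInt_pos_ge0 a b : 0 < a <= b -> 0 <= RInt f a b.
Proof.
  intros Hab. apply RInt_ge_0; [lra | apply ex_RInt_pos; lra |].
  intros t Ht. apply f_nonneg. lra.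
Qed.

Lemma RInt_pos_le_sub a' a b b' :
  0 < a' <= a -> a <= b -> b <= b' -> RInt f a b <= RInt f a' b'.
Proof.
  intros Ha Hab Hb.
  rewrite <- (RInt_Chasles f a' a b') by (apply ex_RInt_pos; lra).
  rewrite <- (RInt_Chasles f a b b') by (apply ex_RInt_pos; lra).
  assert (0 <= RInt f a' a) by (apply RInt_pos_ge0; lra).
  assert (0 <= RInt f b b') by (apply RInt_pos_ge0; lra).
  unfold plus; simpl. lra.
Qed.

Lemma RInt_pos_le_of_dominated M :
  0 <= M -> (forall t, 0 < t -> f t <= M / (1 + t) ^ 2) ->
  forall a b, 0 < a <= b -> RInt f a b <= M.
Proof.
  intros HM Hdom a b Hab.
  set (g := fun t => M / (1 + t) ^ 2).
  set (G := fun t => - M / (1 + t)).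
  assert (Hg : is_RInt g a b (minus (G b) (G a))).
  { apply (@is_RInt_derive R_CompleteNormedModule); intros t Ht;
      rewrite Rmin_left, Rmax_right in Ht by lra.
    - unfold g, G. auto_derive; [lra | field; lra].
    - apply (ex_derive_continuous g). unfold g. auto_derive.
      nra. }
  apply Rle_trans with (RInt g a b).
  - apply RInt_le; [lra | apply ex_RInt_pos; lra | eexists; exact Hg |].
    intros t Ht. apply Hdom. lra.
  - rewrite (is_RInt_unique _ _ _ _ Hg). unfold G, minus, plus, opp; simpl.
    assert (0 <= M / (1 + b)) by (apply Rdiv_le_0_compat; lra).
    assert (M / (1 + a) <= M).
    { apply Rmult_le_reg_r with (1 + a). lra.
      unfold Rdiv. rewrite Rmult_assoc, Rinv_l by lra. nra. }
    unfold Rdiv in *. lra.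
Qed.

Lemma is_RInt_gen_pos_sup :
  (exists M, forall a b, 0 < a <= b -> RInt f a b <= M) ->
  exists G, is_RInt_gen f (at_right 0) (Rbar_locally p_infty) G /\
            forall a b, 0 < a <= b -> RInt f a b <= G.
Proof.
  intros [M HM].
  set (E := fun v => exists a b, 0 < a <= b /\ v = RInt f a b).
  destruct (completeness E) as [G [HGub HGleast]].
  { exists M. intros v (a & b & Hab & ->). auto. }
  { exists (RInt f 1 1), 1, 1. split; [lra | reflexivity]. }
  assert (Hup : forall a b, 0 < a <= b -> RInt f a b <= G).
  { intros a b Hab. apply HGub. exists a, b. auto. }
  exists G. split; [| exact Hup].
  intros P [eps HP].
  assert (Hclose : exists a b, 0 < a <= b /\ G - eps < RInt f a b).
  { apply NNPP. intros Hnone.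
    assert (G <= G - eps).
    { apply HGleast. intros v (a & b & Hab & ->).
      apply Rnot_lt_le. intros Hlt. apply Hnone. exists a, b. auto. }
    destruct eps; simpl in *; lra. }
  destruct Hclose as (a0 & b0 & Hab0 & Hlt).
  apply Filter_prod with (Q := fun a => 0 < a < a0) (R := fun b => b0 < b).
  - exists (mkposreal a0 (proj1 Hab0)). intros a Ha Hpos.
    apply ball_Rabs, Rabs_lt_between' in Ha. simpl in Ha. lra.
  - exists b0. auto.
  - intros a b Ha Hb. exists (RInt f a b). split.
    + apply (@RInt_correct R_CompleteNormedModule), ex_RInt_pos; lra.
    + apply HP, ball_Rabs, Rabs_lt_between'.
      assert (RInt f a0 b0 <= RInt f a b) by (apply RInt_pos_le_sub; lra).
      assert (RInt f a b <= G) by (apply Hup; lra).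
      lra.
Qed.

End NonnegIntegrand.

Definition gamma_integrand (s t : R) : R := Rpower t s * exp (- t).

Lemma gamma_integrand_pos s t : 0 < gamma_integrand s t.
Proof. apply Rmult_lt_0_compat; apply exp_pos. Qed.

Lemma gamma_integrand_continuous s t : 0 < t -> continuous (gamma_integrand s) t.
Proof.
  intros Ht. apply (ex_derive_continuous (gamma_integrand s)).
  unfold gamma_integrand, Rpower. auto_derive. lra.
Qed.

Lemma is_derive_gamma_integrand s t : 0 < t ->
  is_derive (gamma_integrand s) t (s * gamma_integrand (s - 1) t - gamma_integrand s t).
Proof.
  intros Ht. unfold gamma_integrand, Rpower. auto_derive; [lra |].
  assert (E : exp ((s - 1) * ln t) * t = exp (s * ln t)).
  { rewrite <- (exp_ln t) at 2 by lra. rewrite <- exp_plus. f_equal. ring. }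
  rewrite <- E. field. lra.
Qed.

Lemma exp_pow_nat (x : R) (n : nat) : exp x ^ n = exp (INR n * x).
Proof.
  induction n as [|n IH]; [simpl; rewrite Rmult_0_l, exp_0; reflexivity |].
  rewrite S_INR, <- tech_pow_Rmult, IH, <- exp_plus. f_equal. ring.
Qed.

Lemma gamma_integrand_dominated s : 0 <= s ->
  exists M, 0 <= M /\ forall t, 0 < t -> gamma_integrand s t <= M / (1 + t) ^ 2.
Proof.
  intros Hs.
  destruct (INR_unbounded (s + 2)) as [m Hm].
  exists (INR m ^ m). split; [apply pow_le; lra |].
  intros t Ht.
  assert (Hpow : Rpower t s * (1 + t) ^ 2 <= (1 + t) ^ m).
  { apply Rle_trans with (Rpower (1 + t) (INR m - 2) * (1 + t) ^ 2).
    - apply Rmult_le_compat_r; [apply pow_le; lra |].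
      apply Rle_trans with (Rpower (1 + t) s);
        [apply Rle_Rpower_l | apply Rle_Rpower]; lra.
    - rewrite <- !Rpower_pow, <- Rpower_plus by lra.
      right. f_equal. simpl. ring. }
  (* [1 + t <= m (1 + t/m) <= m e^(t/m)] *)
  assert (Hexp : (1 + t) ^ m <= INR m ^ m * exp t).
  { replace (exp t) with (exp (t / INR m) ^ m)
      by (rewrite exp_pow_nat; f_equal; field; lra).
    rewrite <- Rpow_mult_distr. apply pow_incr. split; [lra |].
    pose proof (exp_ineq1_le (t / INR m)).
    assert (INR m * (1 + t / INR m) = INR m + t) by (field; lra). nra. }
  unfold gamma_integrand. rewrite exp_Ropp.
  pose proof (exp_pos t). assert (0 < (1 + t) ^ 2) by (apply pow_lt; lra).
  apply Rmult_le_reg_r with ((1 + t) ^ 2 * exp t); [nra |].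
  replace (INR m ^ m / (1 + t) ^ 2 * ((1 + t) ^ 2 * exp t)) with (INR m ^ m * exp t)
    by (field; lra).
  replace (Rpower t s * / exp t * ((1 + t) ^ 2 * exp t)) with (Rpower t s * (1 + t) ^ 2)
    by (field; lra).
  lra.
Qed.

Lemma Gamma_spec y : 1 <= y ->
  is_RInt_gen (gamma_integrand (y - 1)) (at_right 0) (Rbar_locally p_infty) (Gamma y) /\
  forall a b, 0 < a <= b -> RInt (gamma_integrand (y - 1)) a b <= Gamma y.
Proof.
  intros Hy.
  assert (Hcont := gamma_integrand_continuous (y - 1)).
  assert (Hnonneg : forall t, 0 < t -> 0 <= gamma_integrand (y - 1) t)
    by (intros; apply Rlt_le, gamma_integrand_pos).
  destruct (gamma_integrand_dominated (y - 1)) as (M & HM & Hdom); [lra |].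
  destruct (is_RInt_gen_pos_sup _ Hcont Hnonneg) as (G & HG & Hup).
  { exists M. apply RInt_pos_le_of_dominated; auto. }
  replace (Gamma y) with G; [auto |].
  symmetry. apply is_RInt_gen_unique. exact HG.
Qed.

Lemma Gamma_pos y : 1 <= y -> 0 < Gamma y.
Proof.
  intros Hy. destruct (Gamma_spec y Hy) as [_ Hup].
  apply Rlt_le_trans with (RInt (gamma_integrand (y - 1)) 1 2); [| apply Hup; lra].
  apply Rle_lt_trans with (RInt (fun _ => 0) 1 2).
  { rewrite RInt_const. unfold scal; simpl; unfold mult; simpl. lra. }
  apply RInt_lt; [lra | | | ]; intros t Ht.
  - apply gamma_integrand_continuous. lra.
  - apply continuous_const.
  - apply gamma_integrand_pos.
Qed.

Lemma exp_le_exp x y : x <= y -> exp x <= exp y.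
Proof.
  intros [Hlt | ->]; [apply Rlt_le, exp_increasing, Hlt | apply Rle_refl].
Qed.

Lemma gamma_integrand_lim_0 s : 1 <= s ->
  filterlim (gamma_integrand s) (at_right 0) (locally 0).
Proof.
  intros Hs.
  apply (filterlim_le_le (F := at_right 0) (fun _ => 0) _ (fun t => t) 0).
  - exists (mkposreal 1 Rlt_0_1). intros t Ht Hpos.
    apply ball_Rabs, Rabs_lt_between' in Ht. simpl in Ht.
    split; [apply Rlt_le, gamma_integrand_pos |].
    assert (Hpow : Rpower t s <= t).
    { unfold Rpower. rewrite <- (exp_ln t) at 2 by lra.
      apply exp_le_exp. assert (ln t < 0) by (rewrite <- ln_1; apply ln_increasing; lra).
      nra. }
    assert (exp (- t) <= 1) by (rewrite <- exp_0; apply exp_le_exp; lra).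
    assert (0 < Rpower t s) by apply exp_pos.
    unfold gamma_integrand. nra.
  - apply filterlim_const.
  - apply (filterlim_filter_le_1 (F := locally 0)); [apply filter_le_within |].
    apply filterlim_id.
Qed.

Lemma gamma_integrand_lim_infty s : 0 <= s ->
  filterlim (gamma_integrand s) (Rbar_locally p_infty) (locally 0).
Proof.
  intros Hs. destruct (gamma_integrand_dominated s Hs) as (M & HM & Hdom).
  apply (filterlim_le_le (F := Rbar_locally p_infty) (fun _ => 0) _ (fun t => M * / t) 0).
  - exists 0. intros t Ht. split; [apply Rlt_le, gamma_integrand_pos |].
    apply Rle_trans with (1 := Hdom t Ht). apply Rmult_le_compat_l; [lra |].
    apply Rinv_le_contravar; nra.
  - apply filterlim_const.
  - assert (Hinv := is_lim_scal_l Rinv M p_infty 0 (filterlim_Rbar_inv p_infty ltac:(discriminate))).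
    simpl in Hinv. rewrite Rmult_0_r in Hinv. exact Hinv.
Qed.

Lemma filter_prod_pos :
  filter_prod (at_right 0) (Rbar_locally p_infty) (fun ab => 0 < fst ab /\ 0 < snd ab).
Proof.
  apply Filter_prod with (Q := fun a => 0 < a) (R := fun b => 0 < b).
  - exists (mkposreal 1 Rlt_0_1). auto.
  - exists 0. auto.
  - simpl. auto.
Qed.

Lemma is_RInt_gen_gamma_integrand_derive y : 1 <= y ->
  is_RInt_gen (fun t => minus (scal y (gamma_integrand (y - 1) t)) (gamma_integrand y t))
    (at_right 0) (Rbar_locally p_infty) 0.
Proof.
  intros Hy.
  set (h := fun t => minus (scal y (gamma_integrand (y - 1) t)) (gamma_integrand y t)).
  assert (Hderiv : forall t, 0 < t -> Derive (gamma_integrand y) t = h t).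
  { intros t Ht. apply is_derive_unique, is_derive_gamma_integrand. exact Ht. }
  assert (Hex : filter_prod (at_right 0) (Rbar_locally p_infty) (fun ab =>
            forall t, Rmin (fst ab) (snd ab) <= t <= Rmax (fst ab) (snd ab) ->
            ex_derive (gamma_integrand y) t)).
  { refine (filter_imp _ _ _ filter_prod_pos). intros [a b] [Ha Hb] t Ht. simpl in *.
    assert (0 < Rmin a b) by (apply Rmin_glb_lt; lra).
    eexists. apply is_derive_gamma_integrand. lra. }
  assert (Hcont : filter_prod (at_right 0) (Rbar_locally p_infty) (fun ab =>
            forall t, Rmin (fst ab) (snd ab) <= t <= Rmax (fst ab) (snd ab) ->
            continuous (Derive (gamma_integrand y)) t)).
  { refine (filter_imp _ _ _ filter_prod_pos). intros [a b] [Ha Hb] t Ht. simpl in *.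
    assert (Ht0 : 0 < t) by (assert (0 < Rmin a b) by (apply Rmin_glb_lt; lra); lra).
    apply (continuous_ext_loc _ h).
    - exists (mkposreal t Ht0). intros u Hu. apply ball_Rabs, Rabs_lt_between' in Hu.
      simpl in Hu. symmetry. apply Hderiv. lra.
    - apply (ex_derive_continuous h).
      unfold h, gamma_integrand, Rpower, minus, plus, opp, scal. simpl. unfold mult. simpl.
      auto_derive. lra. }
  (* the boundary term t^y e^(-t) vanishes at both ends *)
  pose proof (is_RInt_gen_Derive (gamma_integrand y) 0 0 Hex Hcont
                (gamma_integrand_lim_0 y ltac:(lra))
                (gamma_integrand_lim_infty y ltac:(lra))) as Hftc.
  replace (0 - 0) with 0 in Hftc by ring.
  refine (is_RInt_gen_ext _ _ _ _ Hftc).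
  refine (filter_imp _ _ _ filter_prod_pos). intros [a b] [Ha Hb] t Ht. simpl in *.
  apply Hderiv. assert (0 < Rmin a b) by (apply Rmin_glb_lt; lra). lra.
Qed.

Lemma Gamma_succ y : 1 <= y -> Gamma (y + 1) = y * Gamma y.
Proof.
  intros Hy.
  destruct (Gamma_spec y Hy) as [HG _].
  destruct (Gamma_spec (y + 1)) as [HG1 _]; [lra |].
  replace (y + 1 - 1) with y in HG1 by ring.
  pose proof (@is_RInt_gen_scal R_NormedModule _ _ _ _ _ y _ HG) as HyG.
  pose proof (@is_RInt_gen_minus R_NormedModule _ _ _ _ _ _ _ _ HyG HG1) as Hdiff.
  pose proof (eq_trans (eq_sym (is_RInt_gen_unique _ _ Hdiff))
    (is_RInt_gen_unique _ _ (is_RInt_gen_gamma_integrand_derive y Hy))) as E.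
  change (y * Gamma y - Gamma (y + 1) = 0) in E. lra.
Qed.

Lemma le_weighted_am (w u v lam : R) : 0 < u -> 0 < lam -> w * w = u * v ->
  w <= lam / 2 * u + / (2 * lam) * v.
Proof.
  intros Hu Hlam Hw.
  assert (Hsq : 0 <= u * (lam * lam * u - 2 * lam * w + v)).
  { replace (u * (lam * lam * u - 2 * lam * w + v)) with ((lam * u - w) ^ 2) by nra.
    apply pow2_ge_0. }
  assert (0 <= lam * lam * u - 2 * lam * w + v) by nra.
  apply Rmult_le_reg_l with (2 * lam); [lra |].
  replace (2 * lam * (lam / 2 * u + / (2 * lam) * v)) with (lam * lam * u + v)
    by (field; lra).
  lra.
Qed.

Lemma gamma_integrand_le_weighted_am y lam t : 0 < lam ->
  gamma_integrand (y - 1) t <=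
  lam / 2 * gamma_integrand (y - 1/2 - 1) t + / (2 * lam) * gamma_integrand (y + 1/2 - 1) t.
Proof.
  intros Hlam. unfold gamma_integrand.
  rewrite <- Rmult_assoc, <- (Rmult_assoc (/ (2 * lam))), <- Rmult_plus_distr_r.
  apply Rmult_le_compat_r; [apply Rlt_le, exp_pos |].
  apply le_weighted_am; [apply exp_pos | exact Hlam |].
  rewrite <- !Rpower_plus. f_equal. ring.
Qed.

Lemma Gamma_le_weighted_am y lam : 3/2 <= y -> 0 < lam ->
  Gamma y <= lam / 2 * Gamma (y - 1/2) + / (2 * lam) * Gamma (y + 1/2).
Proof.
  intros Hy Hlam.
  destruct (Gamma_spec y) as [HG _]; [lra |].
  destruct (Gamma_spec (y - 1/2)) as [HA _]; [lra |].
  destruct (Gamma_spec (y + 1/2)) as [HB _]; [lra |].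
  pose proof (@is_RInt_gen_scal R_NormedModule _ _ _ _ _ (lam / 2) _ HA) as HA'.
  pose proof (@is_RInt_gen_scal R_NormedModule _ _ _ _ _ (/ (2 * lam)) _ HB) as HB'.
  rewrite <- (Rabs_pos_eq (Gamma y)) by (apply Rlt_le, Gamma_pos; lra).
  refine (RInt_gen_norm (Fa := at_right 0) (Fb := Rbar_locally p_infty) _ _ _ _ _ _
            HG (@is_RInt_gen_plus R_NormedModule _ _ _ _ _ _ _ _ HA' HB')).
  - apply Filter_prod with (Q := fun a => 0 < a < 1) (R := fun b => 1 < b).
    + exists (mkposreal 1 Rlt_0_1). intros a Ha Hpos.
      apply ball_Rabs, Rabs_lt_between' in Ha. simpl in Ha. lra.
    + exists 1. auto.
    + simpl. intros. lra.
  - apply filter_forall. intros ab t Ht.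
    unfold norm, plus, scal. simpl. unfold abs, mult. simpl.
    rewrite Rabs_pos_eq by apply Rlt_le, gamma_integrand_pos.
    apply gamma_integrand_le_weighted_am. exact Hlam.
Qed.

Lemma Gamma_sq_le y : 3/2 <= y -> Gamma y ^ 2 <= Gamma (y - 1/2) * Gamma (y + 1/2).
Proof.
  intros Hy.
  pose proof (Gamma_pos y ltac:(lra)) as PG.
  pose proof (Gamma_pos (y - 1/2) ltac:(lra)) as PA.
  pose proof (Gamma_le_weighted_am y (Gamma y / Gamma (y - 1/2)) Hy
                ltac:(apply Rdiv_lt_0_compat; lra)) as Hle.
  set (G := Gamma y) in *. set (A := Gamma (y - 1/2)) in *. set (B := Gamma (y + 1/2)) in *.
  replace (G / A / 2 * A + / (2 * (G / A)) * B) with (G / 2 + A * B / (2 * G)) in Hle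
    by (field; lra).
  apply Rmult_le_reg_r with (/ G); [apply Rinv_0_lt_compat; lra |].
  replace (G ^ 2 * / G) with G by (field; lra).
  replace (A * B * / G) with (2 * (A * B / (2 * G))) by (field; lra).
  lra.
Qed.

Lemma le_of_is_derive_nonneg (f df : R -> R) (a b : R) : a <= b ->
  (forall x, a <= x <= b -> is_derive f x (df x)) ->
  (forall x, a <= x <= b -> 0 <= df x) -> f a <= f b.
Proof.
  intros Hab Hd Hpos.
  destruct (MVT_gen f a b df) as (c & Hc & Heq);
    rewrite ?Rmin_left, ?Rmax_right in * by lra.
  - intros x Hx. apply Hd. lra.
  - intros x Hx. apply continuity_pt_filterlim, (ex_derive_continuous f).
    eexists. apply Hd. exact Hx.
  - pose proof (Hpos c Hc). nra.
Qed.

Lemma artanh_lower (z : R) : 0 <= z < 1 ->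
  2 * (z + z ^ 3 / 3 + z ^ 5 / 5) <= ln (1 + z) - ln (1 - z).
Proof.
  intros Hz.
  set (f := fun x => ln (1 + x) - ln (1 - x) - 2 * (x + x ^ 3 / 3 + x ^ 5 / 5)).
  assert (H : f 0 <= f z).
  { apply (le_of_is_derive_nonneg f (fun x => 2 * x ^ 6 / (1 - x ^ 2))); [lra | |].
    - intros x Hx. unfold f. auto_derive; [repeat split; nra | field; repeat split; nra].
    - intros x Hx. apply Rdiv_le_0_compat; nra. }
  unfold f in H. rewrite Rplus_0_r, Rminus_0_r, ln_1 in H. lra.
Qed.

Lemma artanh_upper (z : R) : 0 <= z < 1 ->
  ln (1 + z) - ln (1 - z) <= 2 * (z + z ^ 3 / 3 + z ^ 5 / 5) + 2 * z ^ 7 / (7 * (1 - z ^ 2)).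
Proof.
  intros Hz.
  set (f := fun x => 2 * (x + x ^ 3 / 3 + x ^ 5 / 5) + 2 * x ^ 7 / (7 * (1 - x ^ 2))
                     - (ln (1 + x) - ln (1 - x))).
  assert (H : f 0 <= f z).
  { apply (le_of_is_derive_nonneg f (fun x => 4 * x ^ 8 / (7 * (1 - x ^ 2) ^ 2))); [lra | |].
    - intros x Hx. unfold f. auto_derive; [repeat split; nra | field; repeat split; nra].
    - intros x Hx. apply Rdiv_le_0_compat; [nra |].
      apply Rmult_lt_0_compat; [lra | apply pow_lt; nra]. }
  unfold f in H. rewrite Rplus_0_r, Rminus_0_r, ln_1 in H. lra.
Qed.

Definition ln_ratio (x : R) : R := ln (1 + 1 / x).

Definition ln_ratio_lb (x : R) : R :=
  2 * (1 / (2 * x + 1) + 1 / (3 * (2 * x + 1) ^ 3) + 1 / (5 * (2 * x + 1) ^ 5)).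

Definition ln_ratio_ub (x : R) : R :=
  ln_ratio_lb x + 2 / (7 * (2 * x + 1) ^ 5 * (4 * x * (x + 1))).

(* [1 + 1/x = (1 + z) / (1 - z)] with [z = 1 / (2x + 1)] *)
Lemma ln_ratio_bounds x : 0 < x -> ln_ratio_lb x <= ln_ratio x <= ln_ratio_ub x.
Proof.
  intros Hx. set (z := 1 / (2 * x + 1)).
  assert (Hz : 0 <= z < 1).
  { unfold z. split; [apply Rdiv_le_0_compat; lra |].
    apply Rmult_lt_reg_r with (2 * x + 1); [lra |].
    unfold Rdiv. rewrite Rmult_assoc, Rinv_l by lra. lra. }
  assert (E : ln_ratio x = ln (1 + z) - ln (1 - z)).
  { unfold ln_ratio. rewrite <- ln_div by lra. f_equal. unfold z. field. lra. }
  assert (Elo : 2 * (z + z ^ 3 / 3 + z ^ 5 / 5) = ln_ratio_lb x)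
    by (unfold ln_ratio_lb, z; field; repeat split; lra).
  assert (Ehi : 2 * (z + z ^ 3 / 3 + z ^ 5 / 5) + 2 * z ^ 7 / (7 * (1 - z ^ 2)) = ln_ratio_ub x).
  { unfold ln_ratio_ub, ln_ratio_lb, z. field. repeat split; try lra. nra. }
  rewrite E, <- Elo, <- Ehi. split; [apply artanh_lower | apply artanh_upper]; exact Hz.
Qed.

Definition exponent_lo (x : R) : R := 1/2 - 1 / (4 * x) + 1 / (8 * x ^ 2).
Definition exponent_hi (x : R) : R := exponent_lo x + 1 / (48 * x ^ 3).

Lemma exponent_lo_bounds x : 1 <= x -> 0 <= exponent_lo x <= 1.
Proof.
  intros Hx. set (u := / x).
  assert (Hu : 0 < u <= 1) by (split; [apply Rinv_0_lt_compat; lra |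
    rewrite <- Rinv_1; apply Rinv_le_contravar; lra]).
  replace (exponent_lo x) with (1/2 - u / 4 + u ^ 2 / 8)
    by (unfold exponent_lo, u; field; lra).
  nra.
Qed.

Lemma exponent_hi_bounds x : 1 <= x -> 0 <= exponent_hi x <= 1.
Proof.
  intros Hx. set (u := / x).
  assert (Hu : 0 < u <= 1) by (split; [apply Rinv_0_lt_compat; lra |
    rewrite <- Rinv_1; apply Rinv_le_contravar; lra]).
  replace (exponent_hi x) with (1/2 - u / 4 + u ^ 2 / 8 + u ^ 3 / 48)
    by (unfold exponent_hi, exponent_lo, u; field; lra).
  nra.
Qed.

Fixpoint horner (l : list R) (u : R) : R :=
  match l with [] => 0 | c :: t => c + u * horner t u end.

Lemma horner_pos (c : R) (l : list R) (u : R) :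
  0 < c -> Forall (fun c => 0 <= c) l -> 0 <= u -> 0 < horner (c :: l) u.
Proof.
  intros Hc Hl Hu. simpl.
  enough (0 <= horner l u) by (assert (0 <= u * horner l u) by (apply Rmult_le_pos; auto); lra).
  induction Hl as [| d t Hd Ht IH]; simpl; [lra |].
  apply Rplus_le_le_0_compat; [exact Hd | apply Rmult_le_pos; auto].
Qed.

(* Clearing denominators, the gaps are rational functions whose numerators,
   expanded in powers of [x - 5] (resp. [x - 1]), have positive coefficients. *)
Definition gap_lo_numerator : list R := [26185968398395855125; 355374022580606103450; 843999468955619441715; 1010456719515251474486; 769692904021305719308; 413165188742342913244; 165222057542758350676; 50882398971107649408; 12315676792693688592; 2370731918078601728; 364912852764155776; 44905397434548736; 4392208468321792; 337252546808832; 19901314900992; 871550910464; 26691162112; 510361600; 4587520].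
Definition gap_hi_numerator : list R := [84525956722872; 649803597154173; 2330702524151883; 5180453649291249; 7992290419741383; 9083185892377710; 7875160495573250; 5320931655121600; 2836763347602920; 1200309898015200; 403138573518912; 106878189043968; 22095590308864; 3487827450368; 406017419776; 32849240064; 1649436672; 38707200].


Lemma gap_lo_pos (x : R) : 5 <= x ->
  0 < ln_ratio_lb (x + 1) - exponent_lo x * ln_ratio_ub x
      - (1 - exponent_lo (x + 2)) * ln_ratio_ub (x + 2).
Proof.
  intros Hx.
  replace (ln_ratio_lb (x + 1) - exponent_lo x * ln_ratio_ub x
           - (1 - exponent_lo (x + 2)) * ln_ratio_ub (x + 2))
    with (horner gap_lo_numerator (x - 5) / (840 * ((2 * x + 3) ^ 5 * x ^ 3 * (x + 1)
            * (2 * x + 1) ^ 5 * (x + 2) ^ 3 * (x + 3) * (2 * x + 5) ^ 5)))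
    by (unfold ln_ratio_ub, ln_ratio_lb, exponent_lo, gap_lo_numerator; cbn [horner];
        field; repeat split; lra).
  apply Rdiv_lt_0_compat.
  - apply horner_pos; [lra | repeat constructor; lra | lra].
  - repeat apply Rmult_lt_0_compat; try apply pow_lt; lra.
Qed.

Lemma gap_hi_neg (x : R) : 1 <= x ->
  ln_ratio_ub (x + 1) - exponent_hi x * ln_ratio_lb x
  - (1 - exponent_hi (x + 2)) * ln_ratio_lb (x + 2) < 0.
Proof.
  intros Hx.
  replace (ln_ratio_ub (x + 1) - exponent_hi x * ln_ratio_lb x
           - (1 - exponent_hi (x + 2)) * ln_ratio_lb (x + 2))
    with (- (horner gap_hi_numerator (x - 1) / (1260 * ((2 * x + 3) ^ 5 * (x + 1) * (x + 2)
            * x ^ 3 * (2 * x + 1) ^ 5 * (x + 2) ^ 3 * (2 * x + 5) ^ 5))))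
    by (unfold ln_ratio_ub, ln_ratio_lb, exponent_hi, exponent_lo, gap_hi_numerator;
        cbn [horner]; field; repeat split; lra).
  apply Ropp_lt_gt_0_contravar, Rdiv_lt_0_compat.
  - apply horner_pos; [lra | repeat constructor; lra | lra].
  - repeat apply Rmult_lt_0_compat; try apply pow_lt; lra.
Qed.

Definition gamma_ratio (x : R) : R := Gamma (x + 1/2) * Gamma (x + 3/2) / Gamma (x + 1) ^ 2.

Lemma gamma_ratio_ge1 x : 1/2 <= x -> 1 <= gamma_ratio x.
Proof.
  intros Hx. unfold gamma_ratio.
  pose proof (Gamma_sq_le (x + 1) ltac:(lra)) as H.
  replace (x + 1 - 1/2) with (x + 1/2) in H by field.
  replace (x + 1 + 1/2) with (x + 3/2) in H by field.
  assert (0 < Gamma (x + 1) ^ 2) by (apply pow_lt, Gamma_pos; lra).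
  apply Rmult_le_reg_r with (Gamma (x + 1) ^ 2); [assumption |].
  unfold Rdiv. rewrite Rmult_assoc, Rinv_l by lra. lra.
Qed.

Lemma gamma_ratio_mul_shift x : 1/2 <= x ->
  gamma_ratio x * gamma_ratio (x + 1/2) = (x + 1) / (x + 1/2).
Proof.
  intros Hx. unfold gamma_ratio.
  replace (x + 1/2 + 1/2) with (x + 1) by field.
  replace (x + 1/2 + 3/2) with (x + 1 + 1) by field.
  replace (x + 3/2) with (x + 1/2 + 1) by field.
  rewrite (Gamma_succ (x + 1)), (Gamma_succ (x + 1/2)) by lra.
  assert (0 < Gamma (x + 1)) by (apply Gamma_pos; lra).
  assert (0 < Gamma (x + 1/2)) by (apply Gamma_pos; lra).
  field. repeat split; lra.
Qed.

Definition omega_ratio (n : nat) : R := Omega n ^ 2 / (Omega (n - 1) * Omega (n + 1)).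

Lemma omega_ratio_gamma n : (1 <= n)%nat -> omega_ratio n = gamma_ratio (INR n / 2).
Proof.
  intros Hn. unfold omega_ratio, Omega, gamma_ratio.
  assert (Hpred : INR (n - 1) = INR n - 1) by (rewrite minus_INR by exact Hn; reflexivity).
  assert (Hsucc : INR (n + 1) = INR n + 1) by (rewrite plus_INR; reflexivity).
  replace (INR (n - 1) / 2 + 1) with (INR n / 2 + 1/2) by (rewrite Hpred; field).
  replace (INR (n + 1) / 2 + 1) with (INR n / 2 + 3/2) by (rewrite Hsucc; field).
  set (a := Rpower PI (INR (n - 1) / 2)).
  set (b := Rpower PI (INR (n + 1) / 2)).
  set (c := Rpower PI (INR n / 2)).
  assert (Hab : a * b = c * c).
  { unfold a, b, c. rewrite <- !Rpower_plus. f_equal. rewrite Hpred, Hsucc. field. }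
  assert (0 < a /\ 0 < b /\ 0 < c) as (? & ? & ?) by (repeat split; apply exp_pos).
  assert (1 <= INR n) by (apply (le_INR 1); exact Hn).
  assert (0 < Gamma (INR n / 2 + 1/2)) by (apply Gamma_pos; lra).
  assert (0 < Gamma (INR n / 2 + 3/2)) by (apply Gamma_pos; lra).
  assert (0 < Gamma (INR n / 2 + 1)) by (apply Gamma_pos; lra).
  replace ((c / Gamma (INR n / 2 + 1)) ^ 2) with (a * b / Gamma (INR n / 2 + 1) ^ 2)
    by (rewrite Hab; field; lra).
  field. repeat split; lra.
Qed.

Lemma omega_ratio_ge1 n : (1 <= n)%nat -> 1 <= omega_ratio n.
Proof.
  intros Hn. rewrite omega_ratio_gamma by exact Hn.
  apply gamma_ratio_ge1. assert (1 <= INR n) by (apply (le_INR 1); exact Hn). lra.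
Qed.

Lemma ln_omega_ratio_add n : (1 <= n)%nat ->
  ln (omega_ratio n) + ln (omega_ratio (n + 1)) = ln_ratio (INR n + 1).
Proof.
  intros Hn.
  assert (1 <= INR n) by (apply (le_INR 1); exact Hn).
  pose proof (omega_ratio_ge1 n Hn). pose proof (omega_ratio_ge1 (n + 1) ltac:(lia)).
  rewrite <- ln_mult by lra. unfold ln_ratio. f_equal.
  rewrite !omega_ratio_gamma, plus_INR by lia.
  replace ((INR n + INR 1) / 2) with (INR n / 2 + 1/2) by (simpl; field).
  rewrite gamma_ratio_mul_shift by lra. field. lra.
Qed.

Lemma ln_ratio_le_inv x : 0 < x -> 0 <= ln_ratio x <= 1 / x.
Proof.
  intros Hx. assert (0 < 1 / x) by (apply Rdiv_lt_0_compat; lra).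
  unfold ln_ratio. split.
  - rewrite <- ln_1. apply Rlt_le, ln_increasing; lra.
  - rewrite <- (ln_exp (1 / x)) at 2. apply Rlt_le, ln_increasing; [lra |].
    apply exp_ineq1. lra.
Qed.

Lemma ln_omega_ratio_bounds n : (1 <= n)%nat -> 0 <= ln (omega_ratio n) <= 1 / INR n.
Proof.
  intros Hn.
  assert (1 <= INR n) by (apply (le_INR 1); exact Hn).
  assert (Hge0 : forall k, (1 <= k)%nat -> 0 <= ln (omega_ratio k)).
  { intros k Hk. rewrite <- ln_1.
    destruct (omega_ratio_ge1 k Hk) as [Hlt | ->]; [apply Rlt_le, ln_increasing | ]; lra. }
  pose proof (Hge0 n Hn). pose proof (Hge0 (n + 1)%nat ltac:(lia)).
  pose proof (ln_omega_ratio_add n Hn).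
  pose proof (ln_ratio_le_inv (INR n + 1) ltac:(lra)).
  assert (1 / (INR n + 1) <= 1 / INR n)
    by (apply Rmult_le_compat_l; [lra | apply Rinv_le_contravar; lra]).
  lra.
Qed.

(* [F n > F (n+2) >= F (n+2+2m) >= -C/(n+2+2m)] for every [m] *)
Lemma pos_of_decreasing_by_two (F : nat -> R) (N : nat) (C : R) : (1 <= N)%nat ->
  (forall k, (N <= k)%nat -> F (k + 2)%nat < F k) ->
  (forall k, (N <= k)%nat -> Rabs (F k) <= C / INR k) ->
  forall n, (N <= n)%nat -> 0 < F n.
Proof.
  intros HN Hdecr Hbound n Hn.
  assert (Hmono : forall m, F (n + 2 + 2 * m)%nat <= F (n + 2)%nat).
  { induction m as [| m IH]; [rewrite Nat.add_0_r; lra |].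
    replace (n + 2 + 2 * S m)%nat with (n + 2 + 2 * m + 2)%nat by lia.
    pose proof (Hdecr (n + 2 + 2 * m)%nat ltac:(lia)). lra. }
  set (e := F n - F (n + 2)%nat).
  assert (He : 0 < e) by (pose proof (Hdecr n Hn); unfold e; lra).
  destruct (INR_archimed e C He) as [m Hm].
  set (D := (n + 2 + 2 * m)%nat).
  assert (HD1 : 1 <= INR D) by (apply (le_INR 1); unfold D; lia).
  assert (HDm : INR m <= INR D) by (apply le_INR; unfold D; lia).
  pose proof (Hbound D ltac:(unfold D; lia)) as HFD.
  apply Rabs_le_between in HFD.
  assert (C / INR D < e).
  { apply Rmult_lt_reg_r with (INR D); [lra |].
    unfold Rdiv. rewrite Rmult_assoc, Rinv_l by lra. nra. }
  pose proof (Hmono m). unfold e, D in *. lra.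
Qed.

Definition excess (p : R -> R) (n : nat) : R :=
  ln (omega_ratio n) - p (INR n) * ln_ratio (INR n).

Lemma excess_sub_add2 p n : (1 <= n)%nat ->
  excess p n - excess p (n + 2) =
  ln_ratio (INR n + 1) - p (INR n) * ln_ratio (INR n)
  - (1 - p (INR n + 2)) * ln_ratio (INR n + 2).
Proof.
  intros Hn. unfold excess.
  pose proof (ln_omega_ratio_add n Hn) as H1.
  pose proof (ln_omega_ratio_add (n + 1) ltac:(lia)) as H2.
  replace (n + 1 + 1)%nat with (n + 2)%nat in H2 by lia.
  replace (INR (n + 1) + 1) with (INR n + 2) in H2 by (rewrite plus_INR; simpl; ring).
  replace (INR (n + 2)) with (INR n + 2) by (rewrite plus_INR; reflexivity).
  lra.
Qed.

Lemma excess_abs_le p n : (1 <= n)%nat -> 0 <= p (INR n) <= 1 ->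
  Rabs (excess p n) <= 1 / INR n.
Proof.
  intros Hn Hp. assert (1 <= INR n) by (apply (le_INR 1); exact Hn).
  pose proof (ln_omega_ratio_bounds n Hn).
  pose proof (ln_ratio_le_inv (INR n) ltac:(lra)).
  assert (0 <= p (INR n) * ln_ratio (INR n) <= ln_ratio (INR n)) by (split; nra).
  apply Rabs_le_between. unfold excess. lra.
Qed.

Lemma excess_lo_pos n : (5 <= n)%nat -> 0 < excess exponent_lo n.
Proof.
  apply (pos_of_decreasing_by_two _ 5 1); [lia | |].
  - intros k Hk.
    assert (Hx : 5 <= INR k) by (replace 5 with (INR 5) by (simpl; ring); apply le_INR; lia).
    enough (0 < excess exponent_lo k - excess exponent_lo (k + 2)) by lra.
    rewrite excess_sub_add2 by lia.
    destruct (ln_ratio_bounds (INR k)) as [_ B0]; [lra |].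
    destruct (ln_ratio_bounds (INR k + 1)) as [B1 _]; [lra |].
    destruct (ln_ratio_bounds (INR k + 2)) as [_ B2]; [lra |].
    pose proof (exponent_lo_bounds (INR k) ltac:(lra)).
    pose proof (exponent_lo_bounds (INR k + 2) ltac:(lra)).
    pose proof (gap_lo_pos (INR k) Hx). nra.
  - intros k Hk. apply excess_abs_le; [lia |].
    apply exponent_lo_bounds, (le_INR 1). lia.
Qed.

Lemma excess_hi_neg n : (1 <= n)%nat -> excess exponent_hi n < 0.
Proof.
  intros Hn.
  enough (0 < - excess exponent_hi n) by lra.
  apply (pos_of_decreasing_by_two (fun k => - excess exponent_hi k) 1 1); [lia | | | exact Hn].
  - intros k Hk.
    assert (Hx : 1 <= INR k) by (apply (le_INR 1); exact Hk).
    enough (excess exponent_hi k - excess exponent_hi (k + 2) < 0) by lra.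
    rewrite excess_sub_add2 by lia.
    destruct (ln_ratio_bounds (INR k)) as [B0 _]; [lra |].
    destruct (ln_ratio_bounds (INR k + 1)) as [_ B1]; [lra |].
    destruct (ln_ratio_bounds (INR k + 2)) as [B2 _]; [lra |].
    pose proof (exponent_hi_bounds (INR k) ltac:(lra)).
    pose proof (exponent_hi_bounds (INR k + 2) ltac:(lra)).
    pose proof (gap_hi_neg (INR k) Hx). nra.
  - intros k Hk. rewrite Rabs_Ropp. apply excess_abs_le; [lia |].
    apply exponent_hi_bounds, (le_INR 1). lia.
Qed.

Theorem theorem18 :
  (forall n : nat, (5 <= n)%nat ->
     Rpower (1 + 1 / INR n)
       (1/2 - 1 / (4 * INR n) + 1 / (8 * INR n ^ 2))
     < Omega n ^ 2 / (Omega (n - 1) * Omega (n + 1)))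
  /\
  (forall n : nat, (1 <= n)%nat ->
     Omega n ^ 2 / (Omega (n - 1) * Omega (n + 1))
     < Rpower (1 + 1 / INR n)
         (1/2 - 1 / (4 * INR n) + 1 / (8 * INR n ^ 2) + 1 / (48 * INR n ^ 3))).
Proof.
  split; intros n Hn; fold (omega_ratio n);
    pose proof (omega_ratio_ge1 n ltac:(lia));
    rewrite <- (exp_ln (omega_ratio n)) by lra;
    apply exp_increasing.
  - pose proof (excess_lo_pos n Hn). unfold excess, exponent_lo, ln_ratio in *. lra.
  - pose proof (excess_hi_neg n Hn). unfold excess, exponent_hi, exponent_lo, ln_ratio in *. lra.
Qed.
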